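(* Let $[\pi]$ be any vincular cyclic pattern of length 3 with exactly one vinculum, i.e. $[\pi]$ is one of $[\overline{12}3],[\overline{21}3],[\overline{23}1],[\overline{32}1],[\overline{13}2],[\overline{31}2]$. Then $\left|\mathrm{Av}_n[\pi]\right|=1$ for all $n\ge 1$.
   Context: For $\sigma=\sigma_1\cdots\sigma_n\in S_n$, the cyclic permutation $[\sigma]$ is the set of all rotations $\sigma_k\cdots\sigma_n\sigma_1\cdots\sigma_{k-1}$ of $\sigma$; $[S_n]$ denotes the set of cyclic permutations of length $n$. A vincular pattern is a permutation $\pi\in S_k$ in which some pairs of adjacent positions are joined by an overline (a vinculum). A linear permutation $\tau$ contains the vincular pattern $\pi$ if $\tau$ has a subsequence order-isomorphic to $\pi$ in which, for every pair of positions of $\pi$ joined by a vinculum, the corresponding entries are adjacent in $\tau$. A cyclic permutation $[\sigma]$ contains $[\pi]$ if some rotation of $\sigma$ contains $\pi$; otherwise it avoids $[\pi]$. $\mathrm{Av}_n[\pi]$ is the set of $[\sigma]\in[S_n]$ avoiding $[\pi]$. *)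

From mathcomp Require Import all_boot.
Set Implicit Arguments. Unset Strict Implicit. Unset Printing Implicit Defensive.

Definition is_lperm (n : nat) (t : n.-tuple 'I_n) : bool := uniq t.

(* The cyclic permutation [t]: the set of all rotations of t. *)
Definition cyc_class (n : nat) (t : n.-tuple 'I_n) : {set n.-tuple 'I_n} :=
  [set rot_tuple k t | k : 'I_n].

Definition cyc_perms (n : nat) : {set {set n.-tuple 'I_n}} :=
  [set cyc_class t | t : n.-tuple 'I_n & is_lperm t].

(* A vincular pattern is given by a permutation p (one-line, letters 0..k-1)
   together with a list V of positions j (0-indexed) such that positions j
   and j+1 of p are joined by a vinculum. *)
Definition vcontains (w : seq nat) (p : seq nat) (V : seq nat) : bool :=
  [exists idx : (size p).-tuple 'I_(size w),
    [&& sorted ltn (map val idx),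
        [forall a : 'I_(size p), forall b : 'I_(size p),
           (nth 0 w (tnth idx a) < nth 0 w (tnth idx b)) ==
           (nth 0 p a < nth 0 p b)]
      & all (fun j => (j.+1 < size p) ==>
               (nth 0 (map val idx) j.+1 == (nth 0 (map val idx) j).+1)) V]].

Definition cyc_contains (n : nat) (C : {set n.-tuple 'I_n})
    (p V : seq nat) : bool :=
  [exists t in C, vcontains (map val t) p V].

Definition cyc_avoiders (n : nat) (p V : seq nat) : {set {set n.-tuple 'I_n}} :=
  [set C in cyc_perms n | ~~ cyc_contains C p V].

From mathcomp Require Import all_boot.
From mathcomp Require Import zify.
Set Implicit Arguments. Unset Strict Implicit. Unset Printing Implicit Defensive.

(* Complementation x |-> n-1-x of the letters maps the avoiders of a pattern
   onto the avoiders of the complementary pattern, so only the patterns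
   [1 0 2], [0 2 1] and [2 1 0] (vinculum on the first two letters) need to
   be treated; for each of them the class of the identity is the unique
   avoider.  Every other letter follows an adjacent pair (u, v) in the
   rotation starting with u, so an avoider satisfies a local condition: no
   adjacent pair forms the pattern together with any third letter c.  Rotating an avoider so that 0 comes first (or n-1
   comes last) and taking c to be 0, n-1, or the next value, this condition
   forces the rotation to be increasing, i.e. to be the identity. *)

Definition cyc_shift (n k i : nat) : nat := if k + i < n then k + i else k + i - n.

Lemma nth_rot (T : Type) (x0 : T) (s : seq T) k i : k <= size s -> i < size s ->
  nth x0 (rot k s) i = nth x0 s (cyc_shift (size s) k i).
Proof.
move=> le_ks lt_is; rewrite /rot /cyc_shift nth_cat size_drop nth_drop ltn_subRL.
by case: ifP => // ge_kis; rewrite nth_take; [congr nth; lia | lia].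
Qed.

Section LinearPermutations.
Variable n : nat.
Implicit Types (s t u : n.-tuple 'I_n) (p V : seq nat).

Lemma mem_lperm t x : uniq t -> x \in t.
Proof.
move=> /card_uniqP card_t.
have card_tT : #|t| = #|'I_n| by rewrite card_t size_tuple card_ord.
by rewrite (subset_cardP card_tT (subset_predT _)) inE.
Qed.

Lemma nth_map_val_lt t j : j < n -> nth 0 (map val t) j < n.
Proof.
move=> lt_jn; have : nth 0 (map val t) j \in map val t.
  by rewrite mem_nth // size_map size_tuple.
by case/mapP=> i _ ->; apply: ltn_ord.
Qed.

Lemma nth_lperm_inj t i j : uniq t -> i < n -> j < n -> i != j ->
  nth 0 (map val t) i != nth 0 (map val t) j.
Proof.
move=> ut lt_in lt_jn; rewrite nth_uniq ?size_map ?size_tuple //.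
by rewrite (map_inj_uniq val_inj).
Qed.

Lemma cyc_containsP t p V :
  reflect (exists2 k, k < n & vcontains (rot k (map val t)) p V)
          (cyc_contains (cyc_class t) p V).
Proof.
apply: (iffP existsP) => [[_ /andP[/imsetP[k _ ->] ct]] | [k lt_kn ct]].
  by exists k; rewrite // -map_rot.
exists (rot_tuple (Ordinal lt_kn) t); rewrite /= map_rot ct andbT.
by apply/imsetP; exists (Ordinal lt_kn).
Qed.

Hypothesis n_gt0 : 0 < n.

Lemma cyc_class_rot t k : rot_tuple k t \in cyc_class t.
Proof.
have [lt_kn | ge_kn] := ltnP k n; first by apply/imsetP; exists (Ordinal lt_kn).
apply/imsetP; exists (Ordinal n_gt0) => //; apply: val_inj.
by rewrite /= rot0 rot_oversize // size_tuple.
Qed.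

Lemma cyc_class_sym t u : u \in cyc_class t -> t \in cyc_class u.
Proof.
case/imsetP=> k _ ->.
have t_rot : t = rot_tuple (n - k) (rot_tuple k t).
  by apply: val_inj; rewrite /= -[X in X - k](size_tuple t) -(size_rot k) -/(rotr k _) rotK.
by rewrite {1}t_rot cyc_class_rot.
Qed.

Lemma cyc_class_sub t u : u \in cyc_class t -> cyc_class u \subset cyc_class t.
Proof.
case/imsetP=> k _ ->; apply/subsetP=> _ /imsetP[j _ ->].
have -> : rot_tuple j (rot_tuple k t) = rot_tuple (rot_add t k j) t.
  by apply: val_inj; rewrite /= rot_rot_add.
exact: cyc_class_rot.
Qed.

Lemma cyc_class_eq t u : u \in cyc_class t -> cyc_class u = cyc_class t.
Proof.
move=> tu; apply/eqP; rewrite eqEsubset cyc_class_sub //.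
exact/cyc_class_sub/cyc_class_sym.
Qed.

Lemma cyc_contains_rot t k p V :
  vcontains (rot k (map val t)) p V -> cyc_contains (cyc_class t) p V.
Proof.
by move=> ct; apply/existsP; exists (rot_tuple k t); rewrite cyc_class_rot /= map_rot.
Qed.

Lemma cyc_avoiders_set1 p V s : uniq s -> ~~ cyc_contains (cyc_class s) p V ->
  (forall t, uniq t -> ~~ cyc_contains (cyc_class t) p V -> s \in cyc_class t) ->
  cyc_avoiders n p V = [set cyc_class s].
Proof.
move=> us avs uniq_av; apply/setP => C; rewrite /cyc_avoiders !inE.
apply/andP/eqP => [[/imsetP[t ut ->] avt] | ->]; last first.
  by split=> //; apply/imsetP; exists s; rewrite ?inE.
by rewrite inE in ut; rewrite (cyc_class_eq (uniq_av t ut avt)).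
Qed.

End LinearPermutations.

Definition iso3 (a b c : nat) (p : seq nat) : bool :=
  [forall i : 'I_3, forall j : 'I_3,
     (nth 0 [:: a; b; c] i < nth 0 [:: a; b; c] j) == (nth 0 p i < nth 0 p j)].

Lemma iso3E a b c x y z : iso3 a b c [:: x; y; z] =
  [&& (a < b) == (x < y), (a < c) == (x < z), (b < a) == (y < x),
      (b < c) == (y < z), (c < a) == (z < x) & (c < b) == (z < y)].
Proof.
apply/idP/idP => [/forallP iso | /and5P[? ? ? ? /andP[? ?]]].
  have iso_at i j (lt_i3 : i < 3) (lt_j3 : j < 3) :=
    forallP (iso (Ordinal lt_i3)) (Ordinal lt_j3).
  by rewrite (iso_at 0 1) // (iso_at 0 2) // (iso_at 1 0) // (iso_at 1 2) //
             (iso_at 2 0) // (iso_at 2 1).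
by apply/forallP => -[[|[|[|i]]] ?] //; apply/forallP => -[[|[|[|j]]] ?] //=;
  rewrite ?ltnn.
Qed.

Lemma vcontains3P (w : seq nat) x y z :
  reflect (exists i k, [/\ i.+1 < k, k < size w &
             iso3 (nth 0 w i) (nth 0 w i.+1) (nth 0 w k) [:: x; y; z]])
          (vcontains w [:: x; y; z] [:: 0]).
Proof.
apply: (iffP existsP) => [[[s size_s] /and3P[sorted_s /forallP iso]] |
                          [i [k [lt_ik lt_kw iso]]]].
  case: s size_s sorted_s iso => [|i0 [|i1 [|i2 [|? ?]]]] // size_s /=.
  move=> /and3P[_ lt_i12 _] iso; rewrite andbT => /eqP i1E.
  exists i0, i2; split; [by rewrite -i1E | exact: ltn_ord |].
  apply/forallP => a; apply/forallP => b; move: (iso a) => /forallP /(_ b).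
  by case: a => [[|[|[|a]]] ?] //; case: b => [[|[|[|b]]] ?] //=; rewrite /tnth /= -i1E.
have lt_iw : i < size w by lia.
have lt_i1w : i.+1 < size w by lia.
exists [tuple Ordinal lt_iw; Ordinal lt_i1w; Ordinal lt_kw].
apply/and3P; split; [by rewrite /= lt_ik ltnSn | | by rewrite /= eqxx].
apply/forallP => a; apply/forallP => b; move: iso => /forallP /(_ a) /forallP /(_ b).
by case: a => [[|[|[|a]]] ?] //; case: b => [[|[|[|b]]] ?] //=.
Qed.

Definition compl3 (p : seq nat) : seq nat := map (subn 2) p.

Lemma iso3_compl n a b c x y z : a < n -> b < n -> c < n ->
  [&& x <= 2, y <= 2 & z <= 2] ->
  iso3 (n - a.+1) (n - b.+1) (n - c.+1) (compl3 [:: x; y; z]) =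
  iso3 a b c [:: x; y; z].
Proof.
move=> lt_an lt_bn lt_cn /and3P[le_x2 le_y2 le_z2].
rewrite /compl3 /= !iso3E !ltn_sub2lE // !ltnS.
by apply/and5P/and5P => -[? ? ? ? /andP[? ?]]; split => //; apply/andP.
Qed.

Lemma vcontains_compl n (w : seq nat) x y z : all (gtn n) w ->
  [&& x <= 2, y <= 2 & z <= 2] ->
  vcontains (map (fun a => n - a.+1) w) (compl3 [:: x; y; z]) [:: 0] =
  vcontains w [:: x; y; z] [:: 0].
Proof.
move=> /(all_nthP 0) w_lt le_xyz2.
apply/vcontains3P/vcontains3P => -[i [k [lt_ik lt_kw iso]]];
  exists i, k; move: lt_kw iso; rewrite size_map => lt_kw; split => //;
  move: iso; rewrite !(nth_map 0) ?iso3_compl //; try apply: w_lt; lia.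
Qed.

Section Complement.
Variable n : nat.
Implicit Types (t : n.-tuple 'I_n) (C : {set n.-tuple 'I_n}).

Definition tcompl t : n.-tuple 'I_n := map_tuple (@rev_ord n) t.

Definition ccompl C : {set n.-tuple 'I_n} := [set tcompl t | t in C].

Lemma tcomplK : involutive tcompl.
Proof. by move=> t; apply: val_inj; rewrite /= -map_comp (eq_map (@rev_ordK n)) map_id. Qed.

Lemma ccomplK : involutive ccompl.
Proof. by move=> C; rewrite /ccompl -imset_comp (eq_imset _ tcomplK) imset_id. Qed.

Lemma ccompl_cyc_class t : ccompl (cyc_class t) = cyc_class (tcompl t).
Proof.
rewrite /ccompl -imset_comp; apply: eq_imset => k.
by apply: val_inj; rewrite /= map_rot.
Qed.

Lemma cyc_perms_compl C : (ccompl C \in cyc_perms n) = (C \in cyc_perms n).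
Proof.
suff perms_compl C' : C' \in cyc_perms n -> ccompl C' \in cyc_perms n.
  by apply/idP/idP => [/perms_compl | /perms_compl //]; rewrite ccomplK.
case/imsetP=> t; rewrite inE => ut ->; rewrite ccompl_cyc_class.
by apply/imsetP; exists (tcompl t); rewrite // inE /is_lperm (map_inj_uniq (@rev_ord_inj n)).
Qed.

Lemma cyc_contains_compl C x y z : [&& x <= 2, y <= 2 & z <= 2] ->
  cyc_contains (ccompl C) (compl3 [:: x; y; z]) [:: 0] = cyc_contains C [:: x; y; z] [:: 0].
Proof.
move=> le_xyz2.
have val_compl t : map val (tcompl t) = map (fun a => n - a.+1) (map val t).
  by rewrite -!map_comp.
have val_lt t : all (gtn n) (map val t) by apply/allP => _ /mapP[i _ ->]; apply: ltn_ord.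
apply/existsP/existsP => [[_ /andP[/imsetP[t tC ->]]] | [t /andP[tC ct]]].
  by rewrite val_compl (vcontains_compl (val_lt t) le_xyz2) => ct; exists t; rewrite tC.
exists (tcompl t); rewrite imset_f //= val_compl.
by rewrite (vcontains_compl (val_lt t) le_xyz2).
Qed.

Lemma card_avoiders_compl x y z : [&& x <= 2, y <= 2 & z <= 2] ->
  #|cyc_avoiders n (compl3 [:: x; y; z]) [:: 0]| = #|cyc_avoiders n [:: x; y; z] [:: 0]|.
Proof.
move=> le_xyz2; rewrite -(card_imset _ (can_inj ccomplK)); apply: eq_card => C.
by rewrite (can_imset_pre _ ccomplK) /cyc_avoiders !inE cyc_perms_compl cyc_contains_compl.
Qed.

End Complement.

Definition adj_avoid (n : nat) (p : seq nat) (f : nat -> nat) : Prop :=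
  forall j c, j.+1 < n -> c < n -> c != f j -> c != f j.+1 ->
    ~~ iso3 (f j) (f j.+1) c p.

Lemma rot_adj_avoid n x y z (t : n.-tuple 'I_n) k : uniq t ->
  ~~ cyc_contains (cyc_class t) [:: x; y; z] [:: 0] ->
  adj_avoid n [:: x; y; z] (nth 0 (rot k (map val t))).
Proof.
move=> ut avt j c lt_j1n lt_cn c_neq_j c_neq_j1; apply: contra avt => iso.
set w := map val t; set v := rot k w.
have size_v : size v = n by rewrite size_rot size_map size_tuple.
have n_gt0 : 0 < n by lia.
apply: (cyc_contains_rot n_gt0 (k := rot_add w k j)).
rewrite -rot_rot_add -/v; set r := rot j v.
have nth_r i : i <= 1 -> nth 0 r i = nth 0 v (j + i).
  by move=> le_i1; rewrite nth_rot size_v /cyc_shift; [case: ifP => //; lia | lia | lia].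
have c_in_r : c \in r by rewrite !mem_rot (map_f val (mem_lperm (Ordinal lt_cn) ut)).
apply/vcontains3P; exists 0, (index c r).
split; [| by rewrite index_mem | by rewrite (nth_r 0) ?(nth_r 1) // addn0 addn1 nth_index].
case: (index c r) (nth_index 0 c_in_r) => [|[|i]] // nth_c.
  by move: c_neq_j; rewrite -nth_c nth_r // addn0 eqxx.
by move: c_neq_j1; rewrite -nth_c nth_r // addn1 eqxx.
Qed.

Section IdentityForcing.
Variables (n : nat) (f : nat -> nat).
Hypothesis f_lt : forall j, j < n -> f j < n.
Hypothesis f_inj : forall i j, i < n -> j < n -> i != j -> f i != f j.

Lemma increasing_gap : (forall j, j.+1 < n -> f j < f j.+1) ->
  forall i d, i + d < n -> f i + d <= f (i + d).
Proof.
move=> f_incr i; elim=> [|d IHd] lt_idn; first by rewrite !addn0.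
have := IHd ltac:(lia); have := f_incr (i + d); rewrite !addnS; lia.
Qed.

Lemma increasing_id : (forall j, j.+1 < n -> f j < f j.+1) ->
  forall j, j < n -> f j = j.
Proof.
move=> f_incr j lt_jn.
have := increasing_gap f_incr (i := 0) (d := j) lt_jn.
have := increasing_gap f_incr (i := j) (d := n.-1 - j).
have lt_n1n : n.-1 < n by lia.
rewrite add0n subnKC; [have := f_lt lt_n1n; lia | lia].
Qed.

Lemma adj_avoid210_id : adj_avoid n [:: 2; 1; 0] f -> f 0 = 0 ->
  forall j, j < n -> f j = j.
Proof.
move=> avf f0; apply: increasing_id => -[|j] lt_jn.
  by have := @f_inj 1 0 lt_jn (ltnW lt_jn) isT; rewrite f0; lia.
have := avf j.+1 0 lt_jn; rewrite iso3E /=.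
have := @f_inj j.+1 0 (ltnW lt_jn); have := @f_inj j.+2 0 lt_jn.
have := @f_inj j.+2 j.+1 lt_jn (ltnW lt_jn); rewrite f0; lia.
Qed.

Lemma adj_avoid102_id : adj_avoid n [:: 1; 0; 2] f -> f n.-1 = n.-1 ->
  forall j, j < n -> f j = j.
Proof.
move=> avf f_last; apply: increasing_id => j lt_j1n.
have lt_n1n : n.-1 < n by lia.
have := f_lt (ltnW lt_j1n); have := @f_inj j.+1 j lt_j1n (ltnW lt_j1n).
have := @f_inj j n.-1 (ltnW lt_j1n) lt_n1n; have := @f_inj j.+1 n.-1 lt_j1n lt_n1n.
have := avf j n.-1 lt_j1n lt_n1n; rewrite iso3E /= f_last; lia.
Qed.

Lemma adj_avoid021_id : adj_avoid n [:: 0; 2; 1] f -> f 0 = 0 ->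
  forall j, j < n -> f j = j.
Proof.
move=> avf f0.
suff f_id_upto : forall j, j < n -> forall i, i <= j -> f i = i.
  by move=> k lt_kn; apply: (f_id_upto k lt_kn k (leqnn k)).
elim=> [|j IHj] lt_jn i le_ij; first by move: le_ij; rewrite leqn0 => /eqP ->.
have {}IHj := IHj (ltnW lt_jn).
have [|lt_ji] := leqP i j; first exact: IHj.
have -> : i = j.+1 by lia.
have gt_fj1 : j < f j.+1.
  rewrite ltnNge; apply/negP => le_fj1.
  by have := IHj _ le_fj1; have := @f_inj j.+1 (f j.+1) lt_jn (f_lt lt_jn); lia.
have := IHj j (leqnn j); have := f_lt lt_jn.
have := avf j j.+1 lt_jn lt_jn; rewrite iso3E /=; lia.
Qed.

End IdentityForcing.

Lemma rot_anchor n (t : n.-tuple 'I_n) a e : uniq t -> a < n -> e < n ->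
  exists q, nth 0 (rot q (map val t)) a = e.
Proof.
move=> ut lt_an lt_en; set w := map val t.
have size_w : size w = n by rewrite size_map size_tuple.
have e_in_w : e \in w by rewrite (map_f val (mem_lperm (Ordinal lt_en) ut)).
have := e_in_w; rewrite -index_mem size_w => lt_idx.
pose q := if a <= index e w then index e w - a else n + index e w - a.
have q_shift : cyc_shift n q a = index e w.
  by rewrite /cyc_shift /q; case: (leqP a) => le_a; case: ifP => [|/negbT] lt_n; lia.
have le_qn : q <= n by rewrite /q; case: (leqP a) => ?; lia.
by exists q; rewrite nth_rot size_w ?q_shift ?nth_index.
Qed.

Lemma nth_rot_iota n k i : k < n -> i < n -> nth 0 (rot k (iota 0 n)) i = cyc_shift n k i.
Proof.
move=> lt_kn lt_in.
have lt_shift : cyc_shift n k i < n by rewrite /cyc_shift; case: ifP => [|/negbT] ?; lia.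
by rewrite nth_rot size_iota ?nth_iota // ltnW.
Qed.

Lemma ord_class_avoids n x y z :
  (forall k i j, k < n -> i.+1 < j < n ->
     ~~ iso3 (cyc_shift n k i) (cyc_shift n k i.+1) (cyc_shift n k j) [:: x; y; z]) ->
  ~~ cyc_contains (cyc_class (ord_tuple n)) [:: x; y; z] [:: 0].
Proof.
move=> rot_free; apply/negP => /cyc_containsP[k lt_kn].
rewrite val_enum_ord => /vcontains3P[i [j []]].
rewrite size_rot size_iota => lt_ij lt_jn.
rewrite !nth_rot_iota; try lia.
by apply/negP/rot_free; rewrite ?lt_ij.
Qed.

Lemma card_avoiders_ord n x y z a : a < n ->
  ~~ cyc_contains (cyc_class (ord_tuple n)) [:: x; y; z] [:: 0] ->
  (forall f : nat -> nat, (forall j, j < n -> f j < n) ->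
     (forall i j, i < n -> j < n -> i != j -> f i != f j) ->
     adj_avoid n [:: x; y; z] f -> f a = a -> forall j, j < n -> f j = j) ->
  #|cyc_avoiders n [:: x; y; z] [:: 0]| = 1.
Proof.
move=> lt_an av_ord forced_id; have n_gt0 : 0 < n by lia.
rewrite (cyc_avoiders_set1 n_gt0 _ av_ord) ?cards1 //; first exact: enum_uniq.
move=> t ut avt; have [q anchor] := rot_anchor ut lt_an lt_an.
have rot_id : forall j, j < n -> nth 0 (rot q (map val t)) j = j.
  apply: forced_id anchor; last exact: rot_adj_avoid.
    by move=> j; rewrite -map_rot; apply: (@nth_map_val_lt n (rot_tuple q t)).
  by move=> i j; rewrite -map_rot; apply: (@nth_lperm_inj n (rot_tuple q t)); rewrite rot_uniq.
have -> : ord_tuple n = rot_tuple q t.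
  apply: val_inj; apply: (inj_map val_inj); rewrite /= map_rot val_enum_ord.
  apply: (@eq_from_nth _ 0) => [|j]; first by rewrite size_iota size_rot size_map size_tuple.
  by rewrite size_iota => lt_jn; rewrite nth_iota // rot_id.
exact: cyc_class_rot.
Qed.

Lemma card_avoiders102 n : 0 < n -> #|cyc_avoiders n [:: 1; 0; 2] [:: 0]| = 1.
Proof.
move=> n_gt0; apply: (card_avoiders_ord (a := n.-1) _ _ (@adj_avoid102_id n)); first lia.
(* In a rotation of the identity, adjacent letters are (v, v+1) or (n-1, 0). *)
apply: ord_class_avoids => k i j lt_kn /andP[lt_ij lt_jn].
by rewrite /cyc_shift iso3E /=; do 3 case: ifP => [|/negbT] ?; lia.
Qed.

Lemma card_avoiders021 n : 0 < n -> #|cyc_avoiders n [:: 0; 2; 1] [:: 0]| = 1.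
Proof.
move=> n_gt0; apply: (card_avoiders_ord n_gt0 _ (@adj_avoid021_id n)).
apply: ord_class_avoids => k i j lt_kn /andP[lt_ij lt_jn].
by rewrite /cyc_shift iso3E /=; do 3 case: ifP => [|/negbT] ?; lia.
Qed.

Lemma card_avoiders210 n : 0 < n -> #|cyc_avoiders n [:: 2; 1; 0] [:: 0]| = 1.
Proof.
move=> n_gt0; apply: (card_avoiders_ord n_gt0 _ (@adj_avoid210_id n)).
apply: ord_class_avoids => k i j lt_kn /andP[lt_ij lt_jn].
by rewrite /cyc_shift iso3E /=; do 3 case: ifP => [|/negbT] ?; lia.
Qed.

Theorem theorem3p2 (p : seq nat) (n : nat) :
  perm_eq p [:: 0; 1; 2] -> 1 <= n ->
  #|cyc_avoiders n p [:: 0]| = 1.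
Proof.
move=> perm_p n_gt0.
have : p \in permutations [:: 0; 1; 2] by rewrite mem_permutations.
rewrite (_ : permutations _ = [:: [:: 1; 0; 2]; [:: 0; 1; 2]; [:: 2; 0; 1];
                                 [:: 0; 2; 1]; [:: 1; 2; 0]; [:: 2; 1; 0]]) //.
rewrite !inE => /or4P[| | |/or3P[| |]] /eqP->.
- exact: card_avoiders102.
- by rewrite -[[:: 0; 1; 2]]/(compl3 [:: 2; 1; 0]) card_avoiders_compl ?card_avoiders210.
- by rewrite -[[:: 2; 0; 1]]/(compl3 [:: 0; 2; 1]) card_avoiders_compl ?card_avoiders021.
- exact: card_avoiders021.
- by rewrite -[[:: 1; 2; 0]]/(compl3 [:: 1; 0; 2]) card_avoiders_compl ?card_avoiders102.
- exact: card_avoiders210.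
Qed.
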